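(* Let $G=\mathrm{GL}_n$ with diagonal torus $A$, let $M=M_{(m_1,\dots,m_r)}$ be a standard (block diagonal) Levi subgroup, let $\mu\in X_*(A)_{\mathrm{dom}}$ be minuscule and let $x\in\pi_1(M)$. The following are equivalent: (i) $x\in\kappa_M(W\mu)$; (ii) the unique $\nu\in X_M\otimes\mathbf Q$ mapping to $x$ under $\kappa_M\otimes\mathbf Q$ lies in $\mathrm{Conv}(W\mu)$. Moreover, if $x$ satisfies these conditions and $\tilde\nu\in X_*(A)$ is the unique $M$-dominant $M$-minuscule element with $\kappa_M(\tilde\nu)=x$, then $\tilde\nu\in W\mu$.
   Context: $X_*(A)=\mathbf Z^n$, $W=S_n$ acting by permutations; dominant means non-increasing entries. $\mu$ is minuscule if $\langle\mu,\alpha\rangle\in\{0,\pm1\}$ for all roots $\alpha$ (i.e. $\mu_1-\mu_n\le1$). $\pi_1(M)=X_*(A)/(\text{coroot lattice of }M)\cong\mathbf Z^r$ (block sums), $\kappa_M$ the projection $X_*(A)\to\pi_1(M)$. $A_M$ is the maximal split torus in the center of $M$, $X_M=X_*(A_M)$ (vectors constant on blocks); $\kappa_M\otimes\mathbf Q$ restricts to an isomorphism $X_M\otimes\mathbf Q\to\pi_1(M)\otimes\mathbf Q$. $\mathrm{Conv}$ denotes convex hull in $\mathbf R^n$. $M$-dominant means non-increasing within each block; $M$-minuscule means $\langle\tilde\nu,\alpha\rangle\in\{0,\pm1\}$ for all roots $\alpha$ of $M$. Each element of $\pi_1(M)$ is the image of a unique $M$-dominant $M$-minuscule element. *)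

From HB Require Import structures.
From mathcomp Require Import all_boot all_order all_algebra all_fingroup.
From mathcomp Require Import reals.
Set Implicit Arguments. Unset Strict Implicit. Unset Printing Implicit Defensive.
Import Order.TTheory GRing.Theory Num.Theory.
Local Open Scope ring_scope.

(* X_*(A) = Z^n for the diagonal torus of GL_n *)
Definition cochar (n : nat) := {ffun 'I_n -> int}.

(* W = S_n acting by permutation of coordinates: (s.l)_i = l_(s^-1 i) *)
Definition wact n (s : 'S_n) (l : cochar n) : cochar n := [ffun i => l (s^-1 i)%g].

Definition dominant n (mu : cochar n) : Prop :=
  forall i j : 'I_n, (i <= j)%N -> mu j <= mu i.

(* minuscule: <mu, alpha> in {0,1,-1} for every root alpha = e_i - e_j (i <> j) *)
Definition minuscule n (mu : cochar n) : Prop :=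
  forall i j : 'I_n, i != j -> `|mu i - mu j| <= 1.

(* Standard Levi M_(m_1,...,m_r), m = [:: m_1; ...; m_r]:
   index i (0-based) lies in block k iff m_1+..+m_k <= i < m_1+..+m_(k+1) *)
Definition in_block (m : seq nat) (k i : nat) : bool :=
  (sumn (take k m) <= i < sumn (take k.+1 m))%N.

(* pi_1(M) = Z^r *)
Definition pi1M (m : seq nat) := {ffun 'I_(size m) -> int}.

Definition kappaM n (m : seq nat) (l : cochar n) : pi1M m :=
  [ffun k : 'I_(size m) => \sum_(i < n | in_block m k i) l i].

(* an element of X_* (A) (x) Q, i.e. Q^n, lies in X_M (x) Q: constant on blocks *)
Definition in_XM_Q n (m : seq nat) (nu : 'I_n -> rat) : Prop :=
  forall (k : nat) (i j : 'I_n), in_block m k i -> in_block m k j -> nu i = nu j.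

Definition kappaM_Q_eq n (m : seq nat) (nu : 'I_n -> rat) (x : pi1M m) : Prop :=
  forall k : 'I_(size m), \sum_(i < n | in_block m k i) nu i = (x k)%:~R.

Definition in_conv (R : realType) n (I : finType) (p : I -> 'I_n -> R)
    (v : 'I_n -> R) : Prop :=
  exists w : I -> R, (forall a, 0 <= w a) /\ \sum_a w a = 1 /\
    forall i, v i = \sum_a w a * p a i.

Definition in_conv_orbit (R : realType) n (mu : cochar n) (v : 'I_n -> R) : Prop :=
  in_conv (fun s : 'S_n => fun i => ((wact s mu) i)%:~R : R) v.

Definition M_dominant n (m : seq nat) (l : cochar n) : Prop :=
  forall (k : nat) (i j : 'I_n), in_block m k i -> in_block m k j ->
    (i <= j)%N -> l j <= l i.

(* M-minuscule: <l, alpha> in {0,1,-1} for all roots alpha = e_i - e_j of M *)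
Definition M_minuscule n (m : seq nat) (l : cochar n) : Prop :=
  forall (k : nat) (i j : 'I_n), in_block m k i -> in_block m k j ->
    i != j -> `|l i - l j| <= 1.

From HB Require Import structures.
From mathcomp Require Import all_boot all_order all_algebra all_fingroup.
From mathcomp Require Import reals zify ring.
Set Implicit Arguments. Unset Strict Implicit. Unset Printing Implicit Defensive.
Import Order.TTheory GRing.Theory Num.Theory.
Local Open Scope ring_scope.

(* A dominant minuscule mu takes only two values a and a + 1, so its W-orbit
   consists of the vectors with entries in {a, a + 1} and the same total sum.
   A point of Conv(W mu) has entries in [a, a + 1] and that total sum, so the
   block sums x_k of (ii) lie between a m_k and (a + 1) m_k; filling block k
   with x_k - a m_k entries a + 1 realises x as kappa_M of an orbit element.
   Conversely, the block-wise average of w mu is the mean of its translates by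
   the permutations preserving every block, hence lies in Conv(W mu). Finally,
   an M-minuscule entry outside {a, a + 1} would push its block sum out of
   [a m_k, (a + 1) m_k], so the M-minuscule lift of x is also in the orbit. *)

Section Blocks.
Variable m : seq nat.

Lemma leq_sumn_take k k' : (k <= k')%N -> (sumn (take k m) <= sumn (take k' m))%N.
Proof.
elim: m k k' => [|y s IH] [|k] [|k'] //= le_kk'.
by rewrite leq_add2l IH.
Qed.

Lemma sumn_take_succ k : (k < size m)%N ->
  sumn (take k.+1 m) = (sumn (take k m) + nth 0%N m k)%N.
Proof.
elim: m k => [|y s IH] [|k] //= lt_k.
  by rewrite take0 addn0.
by rewrite IH // addnA.
Qed.

Lemma in_block_uniq k k' i : in_block m k i -> in_block m k' i -> k = k'.
Proof.
wlog lt_kk' : k k' / (k < k')%N => [W bk bk'|].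
  by case: (ltngtP k k') => // lt; [exact: W bk bk' | exact/esym/(W _ _ lt bk' bk)].
rewrite /in_block => /andP[_ lt_i] /andP[le_i _].
by have := leq_sumn_take lt_kk'; lia.
Qed.

Lemma in_block_size k i : in_block m k i -> (k < size m)%N.
Proof.
move=> /andP[le_i lt_i]; rewrite ltnNge; apply/negP => le_mk.
by move: lt_i le_i; rewrite !take_oversize //; lia.
Qed.

Lemma in_block_ltn k i : in_block m k i -> (i < sumn m)%N.
Proof.
move=> bki; have := leq_sumn_take (in_block_size bki).
by rewrite take_size; move: bki => /andP[_]; lia.
Qed.

Lemma in_block_exists i : (i < sumn m)%N -> exists k, in_block m k i.
Proof.
rewrite -{1}(take_size m); elim: (size m) => [|k IH]; first by rewrite take0.
case: (ltnP i (sumn (take k m))) => [/IH //| le_i lt_i].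
by exists k; rewrite /in_block le_i lt_i.
Qed.

Definition block_of (i : nat) : nat :=
  if [pick k : 'I_(size m) | in_block m k i] is Some k then val k else 0%N.

Lemma in_block_of i : (i < sumn m)%N -> in_block m (block_of i) i.
Proof.
move=> /in_block_exists[k bki]; rewrite /block_of; case: pickP => // none.
by have := none (Ordinal (in_block_size bki)); rewrite bki.
Qed.

Lemma block_of_eq k i : in_block m k i -> block_of i = k.
Proof. by move=> bki; apply: in_block_uniq (in_block_of (in_block_ltn bki)) bki. Qed.

Lemma in_blockE k i : (i < sumn m)%N -> in_block m k i = (block_of i == k).
Proof.
move=> lt_i; apply/idP/eqP => [/block_of_eq //|<-]; exact: in_block_of.
Qed.

End Blocks.

Lemma sum_wact n (s : 'S_n) (l : cochar n) : \sum_i wact s l i = \sum_i l i.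
Proof.
rewrite (reindex_inj (@perm_inj _ s)); apply: eq_bigr => i _.
by rewrite ffunE permK.
Qed.

Section TwoValues.
Variable a : int.

Let a_neq_aS : (a == a + 1) = false.
Proof. by lia. Qed.

Lemma count_two_values (s : seq int) : all (mem [:: a; a + 1]) s ->
  (count_mem a s + count_mem (a + 1)%R s)%N = size s.
Proof.
elim: s => //= y s IH /andP[+ /IH <-]; rewrite !inE => /orP[]/eqP->.
  by rewrite eqxx a_neq_aS.
by rewrite eqxx eq_sym a_neq_aS addnS.
Qed.

Lemma sum_two_values (s : seq int) : all (mem [:: a; a + 1]) s ->
  \sum_(y <- s) y = a *+ size s + (count_mem (a + 1) s)%:R.
Proof.
elim: s => [|y s IH]; first by rewrite big_nil.
rewrite big_cons /= => /andP[+ /IH ->]; rewrite !inE => /orP[]/eqP->.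
  by rewrite a_neq_aS mulrS addrA.
by rewrite eqxx mulrS add1n mulrSr; ring.
Qed.

Lemma perm_two_values (s t : seq int) :
  all (mem [:: a; a + 1]) s -> all (mem [:: a; a + 1]) t ->
  size s = size t -> \sum_(y <- s) y = \sum_(y <- t) y -> perm_eq s t.
Proof.
move=> s2 t2 sz; rewrite (sum_two_values s2) (sum_two_values t2) sz.
move=> /addrI /eqP; rewrite eqr_nat => /eqP cntS.
have cnt0 : count_mem a s = count_mem a t.
  apply/eqP; rewrite -(eqn_add2r (count_mem (a + 1) s)) count_two_values //.
  by rewrite cntS count_two_values // sz.
apply/allP => y y_in; have : y \in [:: a; a + 1].
  by move: y_in; rewrite mem_cat => /orP[/(allP s2)|/(allP t2)].
by rewrite !inE => /orP[]/eqP->; rewrite /= ?cnt0 ?cntS.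
Qed.

Definition two_valued n (l : cochar n) : Prop := forall i, l i = a \/ l i = a + 1.

Lemma two_valued_wact n (s : 'S_n) (l : cochar n) : two_valued l -> two_valued (wact s l).
Proof. by move=> l2 i; rewrite ffunE. Qed.

Lemma two_valued_orbit n (l v : cochar n) : two_valued l -> two_valued v ->
  \sum_i v i = \sum_i l i -> exists s : 'S_n, v = wact s l.
Proof.
move=> l2 v2 sum_eq.
have tuple_two f : two_valued f -> all (mem [:: a; a + 1]) [tuple f i | i < n].
  move=> f2; apply/allP => _ /mapP[i _ ->].
  by rewrite !inE; case: (f2 i) => ->; rewrite eqxx ?orbT.
have sum_tuple (f : cochar n) : \sum_i f i = \sum_(y <- [tuple f i | i < n]) y.
  by rewrite big_tuple; apply: eq_bigr => i _; rewrite tnth_mktuple.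
have /tuple_permP[p vp] : perm_eq [tuple v i | i < n] [tuple l i | i < n].
  by apply: perm_two_values; rewrite ?tuple_two ?size_tuple // -!sum_tuple.
exists p^-1%g; apply/ffunP => i; rewrite ffunE invgK.
by have := congr1 (nth 0 ^~ i) vp; rewrite !nth_mktuple tnth_mktuple.
Qed.

End TwoValues.

Lemma dominant_minuscule_two_valued n (mu : cochar n) :
  dominant mu -> minuscule mu -> exists a, two_valued a mu.
Proof.
case: n mu => [|n] mu dom_mu min_mu; first by exists 0 => -[].
exists (mu ord_max) => i; have le := dom_mu i ord_max (leq_ord i).
case: (eqVneq i ord_max) => [->|ne]; first by left.
by move: le (min_mu i ord_max ne); rewrite ler_norml; lia.
Qed.

Lemma ltr_sum_le_lt (R : numDomainType) (I : finType) (P : pred I) (F G : I -> R) i :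
  P i -> F i < G i -> (forall j, P j -> F j <= G j) ->
  \sum_(j | P j) F j < \sum_(j | P j) G j.
Proof.
move=> Pi ltFGi leFG; rewrite (bigD1 i) // [ltRHS](bigD1 i) //=.
by rewrite ltr_leD // ler_sum // => j /andP[Pj _]; apply: leFG.
Qed.

Lemma sum_step (a : int) (c L : nat) : (c <= L)%N ->
  \sum_(0 <= j < L) (if (j < c)%N then a + 1 else a) = a *+ L + c%:R.
Proof.
move=> le_cL; rewrite (big_cat_nat _ le_cL) //=.
rewrite (eq_big_nat _ _ (F2 := fun=> a + 1)) => [|j /andP[_ ->] //].
rewrite [X in _ + X](eq_big_nat _ _ (F2 := fun=> a)) => [|j]; last first.
  by rewrite leqNgt => /andP[/negbTE ->].
by rewrite !sumr_const_nat subn0 mulrnDl addrAC -mulrnDr subnKC.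
Qed.

Section ConvexHullOfOrbit.
Variables (R : realType) (n : nat) (mu : cochar n).

Lemma in_conv_orbit_ext (v v' : 'I_n -> R) :
  v =1 v' -> in_conv_orbit mu v -> in_conv_orbit mu v'.
Proof.
move=> vv' [w [w_ge0 [w_sum vw]]]; exists w; split=> //; split=> // i.
by rewrite -vv'.
Qed.

Lemma in_conv_orbit_sum (v : 'I_n -> R) :
  in_conv_orbit mu v -> \sum_i v i = (\sum_i mu i)%:~R.
Proof.
move=> [w [_ [w_sum vw]]]; under eq_bigr do rewrite vw; rewrite exchange_big /=.
under eq_bigr do rewrite -mulr_sumr -rmorph_sum /= sum_wact.
by rewrite -mulr_suml w_sum mul1r.
Qed.

Lemma in_conv_orbit_bounds a (v : 'I_n -> R) : two_valued a mu ->
  in_conv_orbit mu v -> forall i, a%:~R <= v i <= (a + 1)%:~R.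
Proof.
move=> mu2 [w [w_ge0 [w_sum vw]]] i.
have const_comb (c : R) : c = \sum_t w t * c by rewrite -mulr_suml w_sum mul1r.
rewrite vw (const_comb a%:~R) (const_comb (a + 1)%:~R).
apply/andP; split; apply: ler_sum => t _; apply: ler_wpM2l => //;
  rewrite ler_int; case: (two_valued_wact t mu2 i) => ->; lia.
Qed.

Lemma avg_in_conv_orbit (s : 'S_n) (H : {set 'S_n}) : H != set0 ->
  in_conv_orbit mu (fun i => #|H|%:R^-1 * \sum_(h in H) ((wact s mu (h i))%:~R : R)).
Proof.
move=> H_neq0; have H_gt0 : (#|H|%:R : R) != 0 by rewrite pnatr_eq0 -lt0n card_gt0.
pose w (t : 'S_n) : R := if (t^-1 * s)%g \in H then #|H|%:R^-1 else 0.
have shift_inj : injective (fun h : 'S_n => s * h^-1)%g by move=> h1 h2 /mulgI /invg_inj.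
have shiftK h : ((s * h^-1)^-1 * s)%g = h by rewrite invMg invgK mulgKV.
exists w; split; [|split].
- by move=> t; rewrite /w; case: ifP; rewrite ?invr_ge0 ?ler0n.
- rewrite (reindex_inj shift_inj) /w; under eq_bigr do rewrite shiftK.
  by rewrite -big_mkcond sumr_const -(mulr_natr (#|H|%:R^-1)) mulVf.
- move=> i; rewrite [RHS](reindex_inj shift_inj) /w /=.
  under [RHS]eq_bigr do rewrite shiftK.
  rewrite mulr_sumr big_mkcond; apply: eq_bigr => h _.
  by case: ifP; rewrite ?mul0r // !ffunE invMg invgK permM.
Qed.

End ConvexHullOfOrbit.

Section Levi.
Variables (n : nat) (m : seq nat).
Hypothesis sumn_m : sumn m = n.

Lemma big_in_block (V : nmodType) k (F : nat -> V) : (k < size m)%N ->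
  \sum_(i < n | in_block m k i) F i =
  \sum_(sumn (take k m) <= i < sumn (take k.+1 m)) F i.
Proof.
move=> lt_k; have le_n : (sumn (take k.+1 m) <= n)%N.
  by rewrite -sumn_m -{2}(take_size m) leq_sumn_take.
rewrite (big_nat_widen _ _ _ _ _ le_n) big_geq_mkord.
by apply: eq_bigl => i; rewrite /in_block andbC.
Qed.

Lemma sum_in_block_const (V : nmodType) (k : 'I_(size m)) (c : V) :
  \sum_(i < n | in_block m k i) c = c *+ nth 0%N m k.
Proof.
rewrite (big_in_block (fun=> c)) // sumr_const_nat sumn_take_succ //.
by rewrite addKn.
Qed.

Lemma sum_over_blocks (V : nmodType) (F : 'I_n -> V) :
  \sum_(k < size m) \sum_(i < n | in_block m k i) F i = \sum_(i < n) F i.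
Proof.
rewrite (exchange_big_dep xpredT) //=; apply: eq_bigr => i _.
have bi : in_block m (block_of m i) i by apply: in_block_of; rewrite sumn_m.
rewrite (big_pred1 (Ordinal (in_block_size bi))) // => k /=.
by rewrite in_blockE ?sumn_m // eq_sym.
Qed.

Lemma sum_kappaM (l : cochar n) : \sum_(k < size m) kappaM m l k = \sum_i l i.
Proof. by rewrite -sum_over_blocks; apply: eq_bigr => k _; rewrite ffunE. Qed.

Lemma kappaM_bounds (V : numDomainType) (f : 'I_n -> V) lo hi (k : 'I_(size m)) :
  (forall i, lo <= f i <= hi) ->
  lo *+ nth 0%N m k <= \sum_(i < n | in_block m k i) f i <= hi *+ nth 0%N m k.
Proof.
move=> f_bd; rewrite -!sum_in_block_const.
by apply/andP; split; apply: ler_sum => i _; case/andP: (f_bd i).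
Qed.

Lemma M_minuscule_two_valued a (l : cochar n) : M_minuscule m l ->
  (forall k : 'I_(size m), a *+ nth 0%N m k <= kappaM m l k <= (a + 1) *+ nth 0%N m k) ->
  two_valued a l.
Proof.
move=> min_l kappa_bd i.
have bi : in_block m (block_of m i) i by apply: in_block_of; rewrite sumn_m.
have /andP[lo hi] := kappa_bd (Ordinal (in_block_size bi)).
rewrite ffunE -!sum_in_block_const /= in lo hi.
have near_i (j : 'I_n) : in_block m (block_of m i) j -> l i - 1 <= l j <= l i + 1.
  move=> bj; case: (eqVneq i j) => [->|ne]; first by lia.
  by have := min_l _ _ _ bi bj ne; rewrite ler_norml; lia.
suff : a <= l i <= a + 1 by lia.
apply/andP; split; rewrite leNgt; apply/negP => out.
- move: lo; rewrite leNgt => /negP; apply.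
  apply: (ltr_sum_le_lt (F := l) (G := fun=> a) bi out) => j /near_i.
  by lia.
- move: hi; rewrite leNgt => /negP; apply.
  apply: (ltr_sum_le_lt (F := fun=> a + 1) (G := l) bi out) => j /near_i.
  by lia.
Qed.

Lemma M_minuscule_in_orbit a (mu l : cochar n) (s : 'S_n) : two_valued a mu ->
  M_minuscule m l -> kappaM m l = kappaM m (wact s mu) -> exists s', l = wact s' mu.
Proof.
move=> mu2 min_l kappa_eq; apply: (two_valued_orbit mu2).
- apply: M_minuscule_two_valued min_l _ => k; rewrite kappa_eq ffunE.
  by apply: kappaM_bounds => i; case: (two_valued_wact s mu2 i) => ->; lia.
- by rewrite -sum_kappaM kappa_eq sum_kappaM sum_wact.
Qed.

(* The first [c k] entries of the [k]-th block are [a + 1], the others [a]. *)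
Definition staircase (a : int) (c : nat -> nat) : cochar n :=
  [ffun i : 'I_n => if (i - sumn (take (block_of m i) m) < c (block_of m i))%N
                    then a + 1 else a].

Lemma kappaM_staircase a (c : nat -> nat) (k : 'I_(size m)) : (c k <= nth 0%N m k)%N ->
  kappaM m (staircase a c) k = a *+ nth 0%N m k + (c k)%:R.
Proof.
move=> le_c; rewrite ffunE.
pose F j := if (j - sumn (take k m) < c k)%N then a + 1 else a.
rewrite (eq_bigr (fun i : 'I_n => F i)) => [|i bi]; last by rewrite ffunE (block_of_eq bi).
rewrite big_in_block // sumn_take_succ // -{1}[sumn _]add0n big_addn addKn.
by under eq_bigr do rewrite /F addnK; apply: sum_step.
Qed.

Lemma exists_two_valued_kappaM a (x : pi1M m) :
  (forall k : 'I_(size m), a *+ nth 0%N m k <= x k <= (a + 1) *+ nth 0%N m k) ->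
  exists2 v : cochar n, two_valued a v & kappaM m v = x.
Proof.
move=> x_bd; pose c k := if insub k is Some k' then `|x k' - a *+ nth 0%N m k'|%N else 0%N.
exists (staircase a c) => [i|]; first by rewrite ffunE; case: ifP; [right|left].
apply/ffunP => k; rewrite kappaM_staircase /c valK;
  have := x_bd k; rewrite mulrnDl; move: (a *+ _) (x k) => u xk; lia.
Qed.

Lemma orbit_of_conv (R : realType) a (mu : cochar n) (x : pi1M m) (nu : 'I_n -> rat) :
  two_valued a mu -> kappaM_Q_eq nu x ->
  in_conv_orbit mu (fun i => ratr (nu i) : R) -> exists s, kappaM m (wact s mu) = x.
Proof.
move=> mu2 kappa_nu conv_nu.
have nu_bd i : a%:~R <= nu i <= (a + 1)%:~R.
  by rewrite -!(ler_rat R) !ratr_int; apply: (in_conv_orbit_bounds mu2 conv_nu).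
have x_bd (k : 'I_(size m)) : a *+ nth 0%N m k <= x k <= (a + 1) *+ nth 0%N m k.
  by rewrite -!(ler_int rat) -kappa_nu !rmorphMn; apply: kappaM_bounds.
have sum_nu : \sum_i nu i = (\sum_i mu i)%:~R.
  apply: (fmorph_inj (ratr : rat -> R)); rewrite rmorph_sum rmorph_int.
  exact: in_conv_orbit_sum conv_nu.
have [v v2 kappa_v] := exists_two_valued_kappaM x_bd.
have [s v_eq] : exists s, v = wact s mu.
  apply: (two_valued_orbit mu2 v2); apply: (@intr_inj rat).
  rewrite -sum_kappaM kappa_v -sum_nu -sum_over_blocks rmorph_sum.
  by apply: eq_bigr => k _; rewrite kappa_nu.
by exists s; rewrite -v_eq.
Qed.

Definition block_stab : {set 'S_n} :=
  [set h : 'S_n | [forall j, block_of m (h j) == block_of m j]].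

Definition stab_fiber (i j : 'I_n) : {set 'S_n} := [set h in block_stab | h i == j].

Lemma block_stab1 : (1%g : 'S_n) \in block_stab.
Proof. by rewrite inE; apply/forallP => j; rewrite perm1. Qed.

Lemma stab_fiber_refl (i : 'I_n) : (1%g : 'S_n) \in stab_fiber i i.
Proof. by rewrite inE block_stab1 perm1 eqxx. Qed.

Lemma stab_fiber_rcoset (i j : 'I_n) : block_of m j = block_of m i ->
  stab_fiber i j = (stab_fiber i i :* tperm i j)%g.
Proof.
move=> same; apply/setP => h; rewrite mem_rcoset tpermV !inE permM.
have t_block y : block_of m (tperm i j y) = block_of m y by case: tpermP => // ->.
congr andb; last by rewrite (canF_eq (tpermK i j)) tpermL.
by apply/forallP/forallP => h_stab y; have := h_stab y; rewrite permM t_block.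
Qed.

Lemma card_stab_fiber (i j : 'I_n) : #|stab_fiber i j| =
  if block_of m j == block_of m i then #|stab_fiber i i| else 0%N.
Proof.
case: eqP => [same|diff]; first by rewrite stab_fiber_rcoset // card_rcoset.
apply/eqP; rewrite cards_eq0; apply/eqP/setP => h; rewrite !inE.
apply/negP => /andP[/forallP/(_ i)/eqP h_stab /eqP hij].
by apply: diff; rewrite -hij.
Qed.

Lemma sum_block_stab (V : nmodType) (g : 'I_n -> V) (i : 'I_n) :
  \sum_(h in block_stab) g (h i) =
  (\sum_(j < n | in_block m (block_of m i) j) g j) *+ #|stab_fiber i i|.
Proof.
rewrite (partition_big (fun h : 'S_n => h i) xpredT) //= -sumrMnl [RHS]big_mkcond /=.
apply: eq_bigr => j _; rewrite (eq_bigr (fun=> g j)) => [|h /andP[_ /eqP->]] //.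
rewrite (eq_bigl (mem (stab_fiber i j))) => [|h]; last by rewrite !inE.
by rewrite sumr_const card_stab_fiber in_blockE ?sumn_m //; case: ifP.
Qed.

Definition block_avg (v : cochar n) (i : 'I_n) : rat :=
  (\sum_(j < n | in_block m (block_of m i) j) v j)%:~R /
  #|[pred j : 'I_n | in_block m (block_of m i) j]|%:R.

Lemma block_avg_in_XM (v : cochar n) : in_XM_Q m (block_avg v).
Proof. by move=> k i j bi bj; rewrite /block_avg (block_of_eq bi) (block_of_eq bj). Qed.

Lemma block_avg_kappaM (v : cochar n) : kappaM_Q_eq (block_avg v) (kappaM m v).
Proof.
move=> k; set N := #|[pred j : 'I_n | in_block m k j]|.
rewrite ffunE (eq_bigr (fun=> (kappaM m v k)%:~R / N%:R)).
  case: (posnP N) => [empty|nonempty].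
    by rewrite !big_pred0 // => i; have := card0_eq empty i; rewrite !inE.
  rewrite sumr_const -[#|_|]/N -(mulr_natr ((kappaM m v k)%:~R / N%:R)) divfK ?ffunE //.
  by rewrite pnatr_eq0 -lt0n.
by move=> i bi; rewrite /block_avg (block_of_eq bi) ffunE.
Qed.

Lemma block_avg_in_conv_orbit (R : realType) (mu : cochar n) (s : 'S_n) :
  in_conv_orbit mu (fun i => ratr (block_avg (wact s mu) i) : R).
Proof.
have H_neq0 : block_stab != set0 by apply/set0Pn; exists 1%g; apply: block_stab1.
apply: in_conv_orbit_ext (avg_in_conv_orbit R mu s H_neq0) => i; apply/esym.
set N := #|[pred j : 'I_n | in_block m (block_of m i) j]|; set c := #|stab_fiber i i|.
have N_gt0 : (0 < N)%N.
  by apply/card_gt0P; exists i; rewrite inE; apply: in_block_of; rewrite sumn_m.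
have c_gt0 : (0 < c)%N by apply/card_gt0P; exists 1%g; apply: stab_fiber_refl.
have card_H : (#|block_stab|%:R : R) = N%:R *+ c.
  by have := sum_block_stab (fun=> (1 : R)) i; rewrite !sumr_const.
rewrite (sum_block_stab (fun j => (wact s mu j)%:~R : R)) card_H /block_avg.
have sumE : \sum_(j < n | in_block m (block_of m i) j) ((wact s mu j)%:~R : R) =
    (\sum_(j < n | in_block m (block_of m i) j) wact s mu j)%:~R.
  by rewrite rmorph_sum.
rewrite sumE fmorph_div /= ratr_int ratr_nat -/N -/c.
by field; rewrite !pnatr_eq0 -!lt0n N_gt0 c_gt0.
Qed.

End Levi.

Theorem lemma4p7 (R : realType) (n : nat) (m : seq nat) (mu : cochar n)
    (x : pi1M m) :
  all (fun a => (0 < a)%N) m -> sumn m = n ->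
  dominant mu -> minuscule mu ->
  ((exists s : 'S_n, kappaM m (wact s mu) = x) <->
   (exists nu : 'I_n -> rat, [/\ in_XM_Q m nu, kappaM_Q_eq nu x &
      in_conv_orbit mu (fun i => (ratr (nu i) : R))])) /\
  ((exists s : 'S_n, kappaM m (wact s mu) = x) ->
   forall nut : cochar n, M_dominant m nut -> M_minuscule m nut ->
     kappaM m nut = x -> exists s : 'S_n, nut = wact s mu).
Proof.
move=> _ sumn_m dom_mu min_mu; have [a mu2] := dominant_minuscule_two_valued dom_mu min_mu.
split; [split|].
- case=> s <-; exists (block_avg m (wact s mu)); split.
  + exact: block_avg_in_XM.
  + exact: block_avg_kappaM.
  + exact: block_avg_in_conv_orbit.
- by case=> nu [_ kappa_nu conv_nu]; apply: orbit_of_conv mu2 kappa_nu conv_nu.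
- case=> s <- nut _ min_nut kappa_nut.
  exact: M_minuscule_in_orbit mu2 min_nut kappa_nut.
Qed.
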